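(* In the setting below, for every nonempty $A\subseteq[n]$: $\Pr_{\psi\sim\Psi}(E_1(\psi)\wedge E_2(\psi)\wedge\neg E_3(\psi))\le 2^{-6}$.
   Context: $[N]:=\{0,\dots,N-1\}$. Fix integers $n\ge1$ and real $0<\varepsilon<1$. Let $b:=2^{\lceil\log_2(9\cdot 2^{23}\varepsilon^{-2})\rceil}$ and $k:=\lceil\tfrac{15}{2}\ln b+16\rceil$. Hash families: for $d\ge1$, identify $[2^d]$ with $\mathrm{GF}(2^d)$ via binary representation. For $k'\ge1$, $N\le 2^d$, $c\le d$, $\mathcal H_{k'}([N],[2^c])$ is the uniform distribution over tuples $(a_0,\dots,a_{k'-1})\in\mathrm{GF}(2^d)^{k'}$, each giving $x\mapsto(\sum_ia_ix^i)\bmod 2^c$ on $[N]$; $\mathcal G_{k'}([N])$ is uniform over the same tuples giving $x\mapsto\mathrm{tz}(\sum_ia_ix^i)$, $\mathrm{tz}(y)$ = number of trailing zeros of the $d$-bit representation of $y$ ($\mathrm{tz}(0)=d$). Here $d$ is a fixed integer with $2^d\ge N$, $d\ge c$. $\Psi:=\mathcal G_2([n])\times\mathcal H_2([n],[2^5b^2])\times\mathcal H_k([2^5b^2],[b])$ with the uniform product distribution; $\psi=(f,g,h)$. For fixed nonempty $A\subseteq[n]$: $t(f):=\max_{a\in A}f(a)-\log_2b+9$; $s(f):=\max(0,t(f))$; $R(f):=\{a\in A: f(a)\ge s(f)\}$. Events: $E_1(\psi)$: $2^{-16}b\le 2^{-t(f)}|A|\le 2^{-1}b$; $E_2(\psi)$: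 $\big||R(f)|-2^{-s(f)}|A|\big|\le\frac{\varepsilon}{3}2^{-s(f)}|A|$; $E_3(\psi)$: $g(a)\ne g(a')$ for all distinct $a,a'\in R(f)$. *)

From HB Require Import structures.
From mathcomp Require Import all_boot all_order all_algebra.
From mathcomp Require Import reals exp.
Set Implicit Arguments. Unset Strict Implicit. Unset Printing Implicit Defensive.
Import Order.TTheory GRing.Theory Num.Theory.
Local Open Scope ring_scope.

(* bexp eps = ceil(log2(9 * 2^23 * eps^-2)) (a positive integer for 0<eps<1) *)
Definition bexp (R : realType) (eps : R) : nat :=
  `| Num.ceil (ln (9 * 2 ^+ 23 / eps ^+ 2) / ln 2) |%N.
Definition bpar (R : realType) (eps : R) : nat := (2 ^ bexp eps)%N.
Definition kpar (R : realType) (eps : R) : nat :=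
  `| Num.ceil (15 / 2 * ln ((bpar eps)%:R : R) + 16) |%N.

(* the integer x in [2^d] as the polynomial whose coefficients are its binary digits *)
Definition bitpoly (d x : nat) : {poly 'F_2} := \poly_(i < d) ((odd (x %/ 2 ^ i))%:R).
Definition bits2nat (d : nat) (y : {poly 'F_2}) : nat :=
  (\sum_(i < d) nat_of_ord (nth 0%R (polyseq y) i) * 2 ^ i)%N.
(* x |-> sum_i a_i x^i computed in GF(2^d) = F_2[X]/(p), p irreducible of degree d,
   returned as the d-bit integer *)
Definition gfeval (d : nat) (p : {poly 'F_2}) (m : nat) (a : {ffun 'I_m -> 'I_(2 ^ d)})
  (x : nat) : nat :=
  bits2nat d (modp (\sum_(i < m) bitpoly d (a i) * bitpoly d x ^+ i) p).
(* number of trailing zeros of the d-bit representation of y (= d for y = 0) *)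
Definition tz (d y : nat) : nat := (\max_(j < d.+1 | 2 ^ j %| y) j)%N.

(* H_m-functions: x |-> (poly) mod 2^c ; G_m-functions: x |-> tz(poly) *)
Definition hfun (d : nat) (p : {poly 'F_2}) (m c : nat) (a : {ffun 'I_m -> 'I_(2 ^ d)})
  (x : nat) : nat := (gfeval p a x %% 2 ^ c)%N.
Definition gfun (d : nat) (p : {poly 'F_2}) (m : nat) (a : {ffun 'I_m -> 'I_(2 ^ d)})
  (x : nat) : nat := tz d (gfeval p a x).

Definition tval (n : nat) (A : {set 'I_n}) (f : nat -> nat) (be : nat) : int :=
  ((\max_(a in A) f (val a))%N)%:Z - be%:Z + 9.
Definition sval (n : nat) (A : {set 'I_n}) (f : nat -> nat) (be : nat) : int :=
  Num.max 0 (tval A f be).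
Definition Rset (n : nat) (A : {set 'I_n}) (f : nat -> nat) (be : nat) : {set 'I_n} :=
  [set a in A | sval A f be <= (f (val a))%:Z].

(* ---------- events (here b = 2^be, so log2 b = be) ---------- *)
Definition E1 (R : realType) (n : nat) (A : {set 'I_n}) (f : nat -> nat) (be : nat) : bool :=
  ((2 : R) ^ (- 16%:Z) * (2 ^ be)%N%:R <= (2 : R) ^ (- tval A f be) * #|A|%:R)
  && ((2 : R) ^ (- tval A f be) * #|A|%:R <= (2 : R) ^ (- 1%:Z) * (2 ^ be)%N%:R).
Definition E2 (R : realType) (eps : R) (n : nat) (A : {set 'I_n}) (f : nat -> nat)
  (be : nat) : bool :=
  `| #|Rset A f be|%:R - (2 : R) ^ (- sval A f be) * #|A|%:R |
    <= eps / 3 * ((2 : R) ^ (- sval A f be) * #|A|%:R).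
Definition E3 (n : nat) (A : {set 'I_n}) (f g : nat -> nat) (be : nat) : bool :=
  [forall a in Rset A f be, forall a' in Rset A f be, (a != a') ==> (g (val a) != g (val a'))].

(* ---------- the sample space Psi = G_2([n]) x H_2([n],[2^5 b^2]) x H_k([2^5 b^2],[b]) ---------- *)
Definition Psi (R : realType) (eps : R) (d1 d2 d3 : nat) : finType :=
  ({ffun 'I_2 -> 'I_(2 ^ d1)} * {ffun 'I_2 -> 'I_(2 ^ d2)}
     * {ffun 'I_(kpar eps) -> 'I_(2 ^ d3)})%type.

Definition prob_bad (R : realType) (eps : R) (n : nat) (A : {set 'I_n})
  (d1 d2 d3 : nat) (p1 p2 p3 : {poly 'F_2}) : R :=
  let be := bexp eps in
  let c2 := (5 + 2 * be)%N in
  #|[set psi : Psi eps d1 d2 d3 |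
      let f := gfun p1 psi.1.1 in
      let g := hfun p2 c2 psi.1.2 in
      [&& E1 R A f be, E2 eps A f be & ~~ E3 A f g be]]|%:R
  / #|Psi eps d1 d2 d3|%:R.

From Pilot Require Import Defs.
From HB Require Import structures.
From mathcomp Require Import all_boot all_order all_algebra.
From mathcomp Require Import reals exp.
From mathcomp Require Import zify ring lra.
Set Implicit Arguments. Unset Strict Implicit. Unset Printing Implicit Defensive.
Import Order.TTheory GRing.Theory Num.Theory.
Local Open Scope ring_scope.

(* Fix the coefficients a1 of the first hash f = tz(a1_0 + a1_1 x).  If E1 and E2 hold, the
   set R(f) has at most b = 2^be elements (card_Rset_le).  The second hash is
   g(x) = (a_0 + a_1 x in GF(2^d)) mod 2^c with c = 5 + 2 be, GF(2^d) = F_2[X]/(p).  Two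
   distinct points x, x' collide iff the c low bits of a_1 (x - x') vanish, and since
   a_1 |-> a_1 (x - x') is a bijection of the field GF(2^d), exactly a 2^-c fraction of
   the coefficient pairs makes them collide (card_collisions).  A union bound over the at
   most |R|^2/2 pairs of R(f) bounds the probability that g is not injective on R(f) by
   b^2/2 * 2^-c = 2^-6 (card_second_hash_bad).  Averaging over a1 and the unused third
   hash gives the theorem (card_fibres_le). *)

Definition binval (d : nat) (s : nat -> bool) : nat := (\sum_(i < d) s i * 2 ^ i)%N.

Lemma binval_ext d s s' : (forall i, (i < d)%N -> s i = s' i) -> binval d s = binval d s'.
Proof. by move=> eq_s; apply: eq_bigr => i _; rewrite eq_s. Qed.

Lemma binvalS d s : binval d.+1 s = (s 0%N + 2 * binval d (fun i => s i.+1))%N.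
Proof.
rewrite /binval big_ord_recl /= expn0 muln1 big_distrr /=; congr (_ + _)%N.
by apply: eq_bigr => i _; rewrite /bump /= expnS mulnCA.
Qed.

Lemma binval_lt d s : (binval d s < 2 ^ d)%N.
Proof.
elim: d s => [|d IH] s; first by rewrite /binval big_ord0.
by rewrite binvalS expnS; have := IH (fun i => s i.+1); case: (s 0%N) => /=; lia.
Qed.

Lemma binval_eqP d s s' :
  reflect (forall i, (i < d)%N -> s i = s' i) (binval d s == binval d s').
Proof.
apply: (iffP eqP); last exact: binval_ext.
elim: d s s' => [|d IH] s s' //; rewrite !binvalS => eq_val.
have eq0 : s 0%N = s' 0%N.
  move: (congr1 odd eq_val); rewrite !oddD !addKb /=; by case: (s 0%N); case: (s' 0%N).
rewrite eq0 in eq_val => -[|i] lt_i //; apply: (IH (fun i => s i.+1) (fun i => s' i.+1)) => //.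
lia.
Qed.

Lemma binval_mod c d s : (c <= d)%N -> (binval d s %% 2 ^ c)%N = binval c s.
Proof.
move=> le_cd; rewrite /binval -(subnKC le_cd) big_split_ord /= -modnDm.
have /eqP -> : (2 ^ c %| \sum_(i < d - c) s (c + i)%N * 2 ^ (c + i))%N.
  by apply: dvdn_sum => i _; rewrite expnD dvdn_mull // dvdn_mulr.
by rewrite addn0 modn_mod modn_small // binval_lt.
Qed.

Lemma binval_digits d x : (x < 2 ^ d)%N -> binval d (fun i => odd (x %/ 2 ^ i)) = x.
Proof.
elim: d x => [|d IH] x lt_x; first by rewrite /binval big_ord0; rewrite expn0 in lt_x; lia.
rewrite binvalS expn0 divn1.
rewrite (@binval_ext _ _ (fun i => odd ((x %/ 2) %/ 2 ^ i))); last first.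
  by move=> i _; rewrite expnS divnMA.
rewrite IH; last by rewrite ltn_divLR // mulnC -expnS.
by rewrite -modn2; lia.
Qed.

Lemma F2_cases (u : 'F_2) : u = 0 \/ u = 1.
Proof. by case: u => [[|[|k]] lt_k]; [left|right|]; try apply: val_inj. Qed.

Lemma F2_nat (u : 'F_2) : nat_of_ord u = (u != 0).
Proof. by case: (F2_cases u) => ->. Qed.

Lemma F2_nz_inj (u v : 'F_2) : (u != 0) = (v != 0) -> u = v.
Proof. by case: (F2_cases u) => ->; case: (F2_cases v) => ->; rewrite ?oner_eq0. Qed.

Lemma bits2nat_binval d (y : {poly 'F_2}) : bits2nat d y = binval d (fun i => y`_i != 0).
Proof. by apply: eq_bigr => i _; rewrite F2_nat. Qed.

Lemma bits2nat_lt d (y : {poly 'F_2}) : (bits2nat d y < 2 ^ d)%N.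
Proof. by rewrite bits2nat_binval binval_lt. Qed.

Lemma bits2nat_eqP d (y z : {poly 'F_2}) :
  reflect (forall i, (i < d)%N -> y`_i = z`_i) (bits2nat d y == bits2nat d z).
Proof.
rewrite !bits2nat_binval; apply: (iffP (binval_eqP _ _ _)) => eq_yz i /eq_yz //.
  exact: F2_nz_inj.
by move=> ->.
Qed.

Lemma bits2nat_mod c d (y : {poly 'F_2}) :
  (c <= d)%N -> (bits2nat d y %% 2 ^ c)%N = bits2nat c y.
Proof. by move=> le_cd; rewrite !bits2nat_binval binval_mod. Qed.

Lemma bits2nat_eq_subr c (y z : {poly 'F_2}) :
  (bits2nat c y == bits2nat c z) = (bits2nat c (y - z) == 0%N).
Proof.
have zero : bits2nat c 0 = 0%N by rewrite /bits2nat big1 // => i _; rewrite polyseq0 nth_nil.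
rewrite -[X in _ = (_ == X)]zero.
apply/bits2nat_eqP/bits2nat_eqP => eq_yz i /eq_yz; rewrite coefB coef0.
  by move=> ->; rewrite subrr.
by move/eqP; rewrite subr_eq0 => /eqP.
Qed.

Lemma bits2nat_inj d (y z : {poly 'F_2}) : (size y <= d)%N -> (size z <= d)%N ->
  bits2nat d y = bits2nat d z -> y = z.
Proof.
move=> size_y size_z /eqP/bits2nat_eqP eq_yz; apply/polyP => i.
case: (ltnP i d) => [/eq_yz //|le_di].
by rewrite !nth_default // (leq_trans _ le_di).
Qed.

Lemma size_bitpoly d x : (size (bitpoly d x) <= d)%N.
Proof. exact: size_poly. Qed.

Lemma bitpolyK d x : (x < 2 ^ d)%N -> bits2nat d (bitpoly d x) = x.
Proof.
move=> lt_x; rewrite bits2nat_binval -[in RHS](binval_digits lt_x).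
by apply: binval_ext => i lt_i; rewrite coef_poly lt_i; case: (odd _).
Qed.

Lemma bitpoly_inj d x y : (x < 2 ^ d)%N -> (y < 2 ^ d)%N -> bitpoly d x = bitpoly d y -> x = y.
Proof. by move=> lt_x lt_y eq_xy; rewrite -(bitpolyK lt_x) -(bitpolyK lt_y) eq_xy. Qed.

(* Multiplication by a nonzero D is injective on residues modulo an irreducible p,
   i.e. GF(q)[X]/(p) is a field. *)
Lemma mulmod_inj (K : fieldType) (p D u v : {poly K}) :
  irreducible_poly p -> D != 0 -> (size D < size p)%N ->
  (size u < size p)%N -> (size v < size p)%N ->
  (u * D) %% p = (v * D) %% p -> u = v.
Proof.
move=> irr_p nz_D size_D size_u size_v eq_uv.
have coprime_pD : coprimep p D by rewrite irreducible_poly_coprime // gtNdvdp.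
have : dvdp p (u - v).
  by rewrite -(Gauss_dvdpl _ coprime_pD); apply/modp_eq0P; rewrite mulrBl modpD modpN eq_uv subrr.
have size_uv : (size (u - v)%R < size p)%N.
  by apply: leq_ltn_trans (size_polyD _ _) _; rewrite size_polyN gtn_max size_u size_v.
by apply: contraTeq; rewrite -subr_eq0 => nz_uv; rewrite gtNdvdp.
Qed.

Lemma card_multiples N m : (0 < m)%N -> (m %| N)%N -> (#|[set y : 'I_N | m %| y]| * m = N)%N.
Proof.
move=> m_gt0 dvd_mN.
have lt_mul (k : 'I_(N %/ m)) : (k * m < N)%N by rewrite -ltn_divRL.
pose mul_m (k : 'I_(N %/ m)) : 'I_N := Ordinal (lt_mul k).
have mul_m_inj : injective mul_m.
  by move=> k k' /(congr1 val) /eqP; rewrite /= eqn_pmul2r // => /eqP /val_inj.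
have -> : [set y : 'I_N | m %| y]%N = mul_m @: [set: 'I_(N %/ m)].
  apply/setP => y; rewrite inE; apply/idP/imsetP => [dvd_my|[k _ ->]]; last exact: dvdn_mull.
  have lt_k : (y %/ m < N %/ m)%N by rewrite ltn_divRL ?divnK.
  by exists (Ordinal lt_k); rewrite ?inE //; apply: val_inj; rewrite /= divnK.
by rewrite card_imset // cardsT card_ord divnK.
Qed.

Lemma card_ffun2_last (T : finType) (Q : {set T}) :
  #|[set a : {ffun 'I_2 -> T} | a ord_max \in Q]| = (#|T| * #|Q|)%N.
Proof.
pose F (i : 'I_2) : pred T := if i == ord_max then [in Q] else predT.
have -> : [set a : {ffun 'I_2 -> T} | a ord_max \in Q] = [set a in family F].
  apply/setP => a; rewrite !inE; apply/idP/familyP => [Qa i|/(_ ord_max)].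
  - by rewrite /F; case: eqP => [->|].
  - by rewrite /F eqxx.
rewrite cardsE card_family /image_mem (@enum_ordSl 1) (@enum_ordSl 0) enum_ord0 /= /F /=.
by rewrite muln1 cardT.
Qed.

Section LinearHash.
Variables (d c : nat) (p : {poly 'F_2}).
Hypotheses (le_cd : (c <= d)%N) (irr_p : irreducible_poly p) (size_p : size p = d.+1).

Lemma size_modp (q : {poly 'F_2}) : (size (q %% p)%R <= d)%N.
Proof. by rewrite -ltnS -size_p ltn_modpN0 // -size_poly_eq0 size_p. Qed.

Lemma gfeval_linear (a : {ffun 'I_2 -> 'I_(2 ^ d)}) x :
  gfeval p a x = bits2nat d (bitpoly d (a ord0) + (bitpoly d (a ord_max) * bitpoly d x) %% p).
Proof.
rewrite /gfeval big_ord_recl big_ord1 expr0 mulr1 expr1 modpD modp_small; last first.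
  by rewrite size_p ltnS size_bitpoly.
by congr (bits2nat _ (_ + (bitpoly _ (a _) * _) %% _)); apply: val_inj.
Qed.

Lemma hfun_collide (a : {ffun 'I_2 -> 'I_(2 ^ d)}) x x' :
  (hfun p c a x == hfun p c a x') =
  (bits2nat c ((bitpoly d (a ord_max) * (bitpoly d x - bitpoly d x')) %% p) == 0)%N.
Proof.
rewrite /hfun !gfeval_linear !bits2nat_mod // bits2nat_eq_subr.
by rewrite mulrBr modpD modpN opprD addrACA subrr add0r.
Qed.

Lemma card_collisions x x' : (x < 2 ^ d)%N -> (x' < 2 ^ d)%N -> x != x' ->
  (#|[set a : {ffun 'I_2 -> 'I_(2 ^ d)} | hfun p c a x == hfun p c a x']| * 2 ^ c
     = 2 ^ d * 2 ^ d)%N.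
Proof.
move=> lt_x lt_x' neq_xx'.
set D := bitpoly d x - bitpoly d x'.
have size_D : (size D < size p)%N.
  by rewrite size_p ltnS (leq_trans (size_polyD _ _)) // size_polyN geq_max !size_bitpoly.
have nz_D : D != 0.
  by rewrite subr_eq0; apply: contra neq_xx' => /eqP /(bitpoly_inj lt_x lt_x') ->.
pose mulD (y : 'I_(2 ^ d)) : 'I_(2 ^ d) := Ordinal (bits2nat_lt d ((bitpoly d y * D) %% p)).
have mulD_inj : injective mulD.
  move=> y y' /(congr1 val) /(bits2nat_inj (size_modp _) (size_modp _)).
  have size_bp z : (size (bitpoly d z) < size p)%N by rewrite size_p ltnS size_bitpoly.
  move/(mulmod_inj irr_p nz_D size_D (size_bp _) (size_bp _)).
  by move/(bitpoly_inj (ltn_ord y) (ltn_ord y'))/val_inj.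
have -> : [set a : {ffun 'I_2 -> 'I_(2 ^ d)} | hfun p c a x == hfun p c a x'] =
          [set a : {ffun 'I_2 -> 'I_(2 ^ d)} |
            a ord_max \in mulD @^-1: [set y : 'I_(2 ^ d) | 2 ^ c %| y]%N].
  by apply/setP => a; rewrite !inE hfun_collide /dvdn bits2nat_mod.
rewrite card_ffun2_last card_ord -mulnA; congr (_ * _)%N.
by rewrite (card_preimset _ mulD_inj) card_multiples ?expn_gt0 ?dvdn_exp2l.
Qed.

End LinearHash.

Lemma card_bigcup_le (I T : finType) (P : pred I) (F : I -> {set T}) :
  (#|\bigcup_(i | P i) F i| <= \sum_(i | P i) #|F i|)%N.
Proof.
elim/big_rec2: _ => [|i S m _ IH]; first by rewrite cards0.
by apply: leq_trans (leq_card_setU _ _) _; apply: leq_add.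
Qed.

Section PairUnionBound.
Variables (n : nat) (H : finType) (g : H -> 'I_n -> nat) (S : {set 'I_n}).

Definition lt_pairs : {set 'I_n * 'I_n} :=
  [set u | [&& u.1 \in S, u.2 \in S & (u.1 < u.2)%N]].

Lemma card_lt_pairs : (2 * #|lt_pairs| <= #|S| * #|S|)%N.
Proof.
pose swap (u : 'I_n * 'I_n) := (u.2, u.1).
have swap_inj : injective swap by move=> [? ?] [? ?] [-> ->].
pose gt_pairs := swap @^-1: lt_pairs.
have disj : lt_pairs :&: gt_pairs = set0.
  apply/setP => -[a a']; rewrite !inE /=.
  by apply/negP => /andP [/and3P [_ _ lt_aa'] /and3P [_ _ /(ltn_trans lt_aa')]]; rewrite ltnn.
have sub : lt_pairs :|: gt_pairs \subset setX S S.
  by apply/subsetP => -[a a']; rewrite !inE /= => /orP [] /and3P [-> -> _].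
rewrite mul2n -addnn -{2}(card_preimset lt_pairs swap_inj) -cardsUI disj cards0 addn0.
by rewrite -cardsX subset_leq_card.
Qed.

Lemma card_not_injective (K C : nat) :
  (forall a a', a \in S -> a' \in S -> (a < a')%N -> #|[set h | g h a == g h a']| * K <= C)%N ->
  (2 * #|[set h | ~~ [forall a in S, forall a' in S, (a != a') ==> (g h a != g h a')]]| * K
     <= #|S| * #|S| * C)%N.
Proof.
move=> collisions_le.
pose Col (u : 'I_n * 'I_n) := [set h | g h u.1 == g h u.2].
set bad := [set h | _].
have bad_sub : bad \subset \bigcup_(u in lt_pairs) Col u.
  apply/subsetP => h; rewrite inE; apply: contraR => not_col.
  apply/forall_inP => a Sa; apply/forall_inP => a' Sa'; apply/implyP => neq_aa'.
  apply: contra not_col => /eqP col.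
  case: (ltngtP a a') => [lt_aa'|lt_a'a|/val_inj eq_aa']; last by rewrite eq_aa' eqxx in neq_aa'.
  - by apply/bigcupP; exists (a, a'); rewrite !inE /= ?Sa ?Sa' ?col.
  - by apply/bigcupP; exists (a', a); rewrite !inE /= ?Sa ?Sa' ?col.
have bad_le : (#|bad| * K <= #|lt_pairs| * C)%N.
  apply: leq_trans (leq_mul (subset_leq_card bad_sub) (leqnn K)) _.
  apply: leq_trans (leq_mul (card_bigcup_le _ _) (leqnn K)) _.
  rewrite big_distrl /= -sum_nat_const; apply: leq_sum => -[a a'].
  by rewrite inE => /and3P [Sa Sa' lt_aa']; apply: collisions_le.
by rewrite -mulnA (leq_trans (leq_mul (leqnn 2) bad_le)) // mulnA leq_mul2r card_lt_pairs orbT.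
Qed.

End PairUnionBound.

Lemma card_second_hash_bad n (A : {set 'I_n}) (f : nat -> nat) be d (p : {poly 'F_2}) :
  (#|Rset A f be| <= 2 ^ be)%N -> (5 + 2 * be <= d)%N -> irreducible_poly p ->
  size p = d.+1 -> (n <= 2 ^ d)%N ->
  (64 * #|[set a : {ffun 'I_2 -> 'I_(2 ^ d)} | ~~ E3 A f (hfun p (5 + 2 * be) a) be]|
     <= 2 ^ d * 2 ^ d)%N.
Proof.
move=> card_R le_cd irr_p size_p le_n.
set c := (5 + 2 * be)%N; set b := (2 ^ be)%N; set N := (2 ^ d * 2 ^ d)%N.
have collide_le (a a' : 'I_n) : a \in Rset A f be -> a' \in Rset A f be -> (a < a')%N ->
    (#|[set h : {ffun 'I_2 -> 'I_(2 ^ d)} | hfun p c h a == hfun p c h a']| * 2 ^ c <= N)%N.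
  move=> _ _ lt_aa'; have lt_pow (x : 'I_n) : (x < 2 ^ d)%N by apply: leq_trans le_n.
  by rewrite card_collisions ?lt_pow // neq_ltn lt_aa'.
have := card_not_injective (g := fun h x => hfun p c h (val x)) collide_le.
have pow_c : (2 ^ c = 32 * (b * b))%N by rewrite /c /b -expnD addnn -mul2n expnD.
have card_R2 : (#|Rset A f be| * #|Rset A f be| * N <= N * (b * b))%N.
  by rewrite mulnC leq_mul2l leq_mul ?orbT.
rewrite pow_c => bad_le; rewrite -(@leq_pmul2r (b * b)) ?muln_gt0 ?expn_gt0 //.
apply: leq_trans _ (leq_trans bad_le card_R2).
by apply: eq_leq; rewrite /E3; ring.
Qed.

(* Under E1 /\ E2 the set R(f) has at most b = 2^be elements: |R| <= (1 + eps/3) 2^-s |A|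
   <= (4/3) 2^-t |A| <= (4/3) b / 2. *)
Lemma card_Rset_le (R : realType) (eps : R) n (A : {set 'I_n}) (f : nat -> nat) be :
  0 < eps -> eps < 1 -> E1 R A f be -> E2 eps A f be -> (#|Rset A f be| <= 2 ^ be)%N.
Proof.
move=> eps_gt0 eps_lt1 /andP [_ E1_upper] E2f.
set t := Defs.tval A f be in E1_upper; set s := Defs.sval A f be in E2f.
set u := (2 : R) ^ (- s) * #|A|%:R in E2f.
set v := (2 : R) ^ (- t) * #|A|%:R in E1_upper.
have u_le_v : u <= v.
  by rewrite ler_wpM2r // ler_weXz2l // ?lerN2 ?ler1n // /s /Defs.sval le_max lexx orbT.
have u_ge0 : 0 <= u by rewrite mulr_ge0 // exprz_ge0.
have b_gt0 : (0 : R) < (2 ^ be)%N%:R by rewrite ltr0n expn_gt0.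
rewrite exprN1 in E1_upper.
move: E2f; rewrite /E2 -/s -/u ler_norml => /andP [_ R_le].
suff : (#|Rset A f be|%:R : R) < (2 ^ be)%N%:R by rewrite ltr_nat => /ltnW.
move: R_le E1_upper u_le_v u_ge0 b_gt0; rewrite /v.
move: (#|Rset A f be|%:R : R) ((2 ^ be)%N%:R : R) u ((2 : R) ^ (- t) * #|A|%:R).
by move=> r b u' v' *; nra.
Qed.

Lemma card_fibres_le (T1 T2 T3 : finType) (P : T1 -> T2 -> bool) (K : nat) :
  (forall a1, 64 * #|[set a2 | P a1 a2]| <= K)%N ->
  (64 * #|[set u : (T1 * T2) * T3 | P u.1.1 u.1.2]| <= #|T1| * K * #|T3|)%N.
Proof.
move=> fibre_le.
have fibres : #|[set u : T1 * T2 | P u.1 u.2]| = (\sum_(a1 : T1) #|[set a2 | P a1 a2]|)%N.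
  transitivity (\sum_(a1 : T1) \sum_(a2 | P a1 a2) 1)%N.
    by rewrite pair_big_dep -sum1_card; apply: eq_bigl => u; rewrite inE.
  by apply: eq_bigr => a1 _; rewrite -sum1_card; apply: eq_bigl => a2; rewrite inE.
have -> : [set u : (T1 * T2) * T3 | P u.1.1 u.1.2] = setX [set u : T1 * T2 | P u.1 u.2] setT.
  by apply/setP => -[u w]; rewrite !inE andbT.
rewrite cardsX cardsT mulnA leq_mul2r fibres big_distrr /= -sum_nat_const.
by rewrite leq_sum ?orbT.
Qed.

Theorem lemma11 (R : realType) (n : nat) (eps : R) (d1 d2 d3 : nat)
  (p1 p2 p3 : {poly 'F_2}) (A : {set 'I_n}) :
  (1 <= n)%N -> 0 < eps -> eps < 1 ->
  (* G_2([n]) over GF(2^d1) = F_2[X]/(p1) *)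
  irreducible_poly p1 -> size p1 = d1.+1 -> (n <= 2 ^ d1)%N ->
  (* H_2([n],[2^5 b^2]) over GF(2^d2) = F_2[X]/(p2) *)
  irreducible_poly p2 -> size p2 = d2.+1 -> (n <= 2 ^ d2)%N ->
  (5 + 2 * bexp eps <= d2)%N ->
  (* H_k([2^5 b^2],[b]) over GF(2^d3) = F_2[X]/(p3) *)
  irreducible_poly p3 -> size p3 = d3.+1 -> (2 ^ 5 * bpar eps ^ 2 <= 2 ^ d3)%N ->
  (bexp eps <= d3)%N ->
  A != set0 ->
  prob_bad eps A d1 d2 d3 p1 p2 p3 <= (2 : R) ^ (- 6%:Z).
Proof.
move=> _ eps_gt0 eps_lt1 _ _ _ irr_p2 size_p2 le_n2 le_cd2 _ _ _ _ _.
rewrite /prob_bad /=; set be := bexp eps.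
pose P (a1 : {ffun 'I_2 -> 'I_(2 ^ d1)}) (a2 : {ffun 'I_2 -> 'I_(2 ^ d2)}) :=
  [&& E1 R A (gfun p1 a1) be, E2 eps A (gfun p1 a1) be
    & ~~ E3 A (gfun p1 a1) (hfun p2 (5 + 2 * be) a2) be].
have fibre_le a1 : (64 * #|[set a2 | P a1 a2]| <= 2 ^ d2 * 2 ^ d2)%N.
  have [/andP [E1f E2f]|not_E12] := boolP (E1 R A (gfun p1 a1) be && E2 eps A (gfun p1 a1) be).
    apply: leq_trans (card_second_hash_bad (card_Rset_le eps_gt0 eps_lt1 E1f E2f)
      le_cd2 irr_p2 size_p2 le_n2).
    by rewrite leq_mul2l subset_leq_card ?orbT //; apply/subsetP => a2; rewrite !inE /P E1f E2f.
  rewrite (_ : [set a2 | P a1 a2] = set0) ?cards0 //; apply/setP => a2; rewrite !inE /P.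
  by apply/negP => /and3P [E1f E2f _]; rewrite E1f E2f in not_E12.
have := card_fibres_le {ffun 'I_(kpar eps) -> 'I_(2 ^ d3)} fibre_le.
rewrite !card_prod !card_ffun !card_ord.
set X := #|_|; set N := (_ * _ * _)%N => bad_le.
have N_gt0 : (0 < N)%N by rewrite !muln_gt0 !expn_gt0.
rewrite -exprnN ler_pdivrMr ?ltr0n // (_ : (2 : R) ^+ 6 = 64); last by rewrite -natrX.
by move: bad_le; rewrite -(ler_nat R) natrM => ?; lra.
Qed.
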